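(* Let $\mathbb{C}$ be a local category. Define a relation on objects by $A\le B$ if and only if $\mathsf{L}A=\mathsf{L}B$ and there exists a morphism $m:A\to B$ with $m\eta_B=\eta_A$. Then: $A\le A$ for every object $A$; $A\le B$ and $B\le C$ imply $A\le C$; and $A\le B$ and $B\le A$ imply $A\cong B$.
   Context: Composition is diagrammatic. A local category is a category $\mathbb{C}$ with, for each object $M$, an object $\mathsf{L}M$ and a morphism $\eta_M:M\to\mathsf{L}M$ such that (L.1) $\mathsf{L}\mathsf{L}M=\mathsf{L}M$ and $\eta_{\mathsf{L}M}=\mathrm{id}_{\mathsf{L}M}$; (L.2) each $\eta_M$ is monic; (L.3) for every $M$ and every $f:N\to\mathsf{L}M$ a pullback of $\eta_M$ along $f$ exists, with leg $m:P\to N$, such that $\mathsf{L}P=\mathsf{L}N$ and $m\eta_N=\eta_P$. *)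

(* Composition is
   diagrammatic: [f ⋅ g] means "first f, then g". *)
Set Implicit Arguments.
Unset Strict Implicit.

Record Category := {
  Ob :> Type;
  Hom : Ob -> Ob -> Type;
  comp : forall A B C : Ob, Hom A B -> Hom B C -> Hom A C;
  idm : forall A : Ob, Hom A A;
  comp_id_l : forall (A B : Ob) (f : Hom A B), comp (idm A) f = f;
  comp_id_r : forall (A B : Ob) (f : Hom A B), comp f (idm B) = f;
  comp_assoc : forall (A B C D : Ob) (f : Hom A B) (g : Hom B C) (h : Hom C D),
      comp (comp f g) h = comp f (comp g h)
}.

Arguments Hom {C} A B : rename.
Arguments comp {C A B C0} f g : rename.
Arguments idm {C} A : rename.

Notation "f ⋅ g" := (comp f g) (at level 40, left associativity).

Definition cast_cod {C : Category} {A X Y : C} (e : X = Y) (f : Hom A X) : Hom A Y :=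
  match e in _ = Y' return Hom A Y' with eq_refl => f end.

Definition monic {C : Category} {A B : C} (f : Hom A B) : Prop :=
  forall (X : C) (g h : Hom X A), g ⋅ f = h ⋅ f -> g = h.

Definition is_pullback {C : Category} {X Y Z P : C}
  (f : Hom X Z) (g : Hom Y Z) (p1 : Hom P X) (p2 : Hom P Y) : Prop :=
  p1 ⋅ f = p2 ⋅ g /\
  forall (Q : C) (q1 : Hom Q X) (q2 : Hom Q Y), q1 ⋅ f = q2 ⋅ g ->
    exists u : Hom Q P, (u ⋅ p1 = q1 /\ u ⋅ p2 = q2) /\
      forall v : Hom Q P, v ⋅ p1 = q1 -> v ⋅ p2 = q2 -> v = u.

Record LocalCat (C : Category) := {
  Lo : C -> C;
  eta : forall M : C, Hom M (Lo M);
  LL : forall M : C, Lo (Lo M) = Lo M;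
  eta_L : forall M : C, cast_cod (LL M) (eta (Lo M)) = idm (Lo M);
  eta_monic : forall M : C, monic (eta M);
  pullback_ax : forall (M N : C) (f : Hom N (Lo M)),
    exists (P : C) (m : Hom P N) (q : Hom P M),
      is_pullback f (eta M) m q /\
      exists e : Lo P = Lo N, m ⋅ eta N = cast_cod e (eta P)
}.

Arguments Lo {C} l M.
Arguments eta {C} l M.

Definition loc_le {C : Category} (l : LocalCat C) (A B : C) : Prop :=
  exists e : Lo l A = Lo l B, exists m : Hom A B, m ⋅ eta l B = cast_cod e (eta l A).

Definition isomorphic {C : Category} (A B : C) : Prop :=
  exists (f : Hom A B) (g : Hom B A), f ⋅ g = idm A /\ g ⋅ f = idm B.

From Stdlib Require Import ProofIrrelevance.

(* Only the monicity of the units (L.2) is needed. Comparison maps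
   compose, and a comparison map m : A -> A satisfies m eta_A = eta_A,
   so it is the identity because eta_A is monic; hence comparisons
   A -> B -> A and B -> A -> B are mutually inverse. *)

Lemma comp_cast_cod {C : Category} {A B X Y : C} (e : X = Y) (f : Hom A B) (g : Hom B X) :
  f ⋅ cast_cod e g = cast_cod e (f ⋅ g).
Proof. destruct e. reflexivity. Qed.

Lemma cast_cod_trans {C : Category} {A X Y Z : C} (e1 : X = Y) (e2 : Y = Z) (f : Hom A X) :
  cast_cod e2 (cast_cod e1 f) = cast_cod (eq_trans e1 e2) f.
Proof. destruct e2, e1. reflexivity. Qed.

(* Objects form an arbitrary type, so this needs UIP (here from proof irrelevance). *)
Lemma cast_cod_loop {C : Category} {A X : C} (e : X = X) (f : Hom A X) :
  cast_cod e f = f.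
Proof. rewrite (proof_irrelevance _ e eq_refl). reflexivity. Qed.

Section Comparisons.

Context {C : Category} {l : LocalCat C}.

Lemma comparison_comp {A B D : C} {e1 : Lo l A = Lo l B} {e2 : Lo l B = Lo l D}
    {m : Hom A B} {n : Hom B D} :
  m ⋅ eta l B = cast_cod e1 (eta l A) ->
  n ⋅ eta l D = cast_cod e2 (eta l B) ->
  (m ⋅ n) ⋅ eta l D = cast_cod (eq_trans e1 e2) (eta l A).
Proof.
  intros Hm Hn.
  rewrite comp_assoc, Hn, comp_cast_cod, Hm. apply cast_cod_trans.
Qed.

Lemma comparison_endo_id {A : C} {e : Lo l A = Lo l A} {m : Hom A A} :
  m ⋅ eta l A = cast_cod e (eta l A) -> m = idm A.
Proof.
  intros Hm. apply (@eta_monic C l A).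
  rewrite Hm, cast_cod_loop. symmetry. apply comp_id_l.
Qed.

Lemma loc_le_refl (A : C) : loc_le l A A.
Proof. exists eq_refl, (idm A). apply comp_id_l. Qed.

Lemma loc_le_trans (A B D : C) : loc_le l A B -> loc_le l B D -> loc_le l A D.
Proof.
  intros [e1 [m Hm]] [e2 [n Hn]].
  exists (eq_trans e1 e2), (m ⋅ n). exact (comparison_comp Hm Hn).
Qed.

Lemma loc_le_antisym_iso (A B : C) : loc_le l A B -> loc_le l B A -> isomorphic A B.
Proof.
  intros [e1 [m Hm]] [e2 [n Hn]].
  exists m, n. split.
  - exact (comparison_endo_id (comparison_comp Hm Hn)).
  - exact (comparison_endo_id (comparison_comp Hn Hm)).
Qed.

End Comparisons.

Theorem proposition5p6 (C : Category) (l : LocalCat C) :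
  (forall A : C, loc_le l A A) /\
  (forall A B D : C, loc_le l A B -> loc_le l B D -> loc_le l A D) /\
  (forall A B : C, loc_le l A B -> loc_le l B A -> isomorphic A B).
Proof.
  split; [|split].
  - apply loc_le_refl.
  - apply loc_le_trans.
  - apply loc_le_antisym_iso.
Qed.
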